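(* Let $(\mathcal{K},[\cdot,\cdot])$ be a Krein space with fundamental symmetry $J$, let $\{k_n\}_{n\in\mathbb{N}}$ be a frame for the Krein space $\mathcal{K}$, and let $S$ be its frame operator. Then for every $k\in\mathcal{K}$, $$k=\sum_{n\in\mathbb{N}}[k_n,k]\,S^{-1}k_n\qquad\text{and}\qquad k=\sum_{n\in\mathbb{N}}[S^{-1}k_n,k]\,k_n,$$ and both series converge unconditionally (in the norm $\|\cdot\|_J$).
   Context: A Krein space $(\mathcal{K},[\cdot,\cdot])$ has a fundamental decomposition $\mathcal{K}=\mathcal{K}_+\oplus\mathcal{K}_-$ and fundamental symmetry $J(k^++k^-)=k^+-k^-$, such that $[h,k]_J:=[h,Jk]$ makes $\mathcal{K}$ a Hilbert space; $\|k\|_J:=\sqrt{[k,k]_J}$. A countable sequence $\{k_n\}$ is a frame for the Krein space $\mathcal{K}$ if there are $0<A\leq B<\infty$ with $A\|k\|_J^2\leq\sum_n|[k_n,k]|^2\leq B\|k\|_J^2$ for all $k$. Let $\mathfrak{k}_2(\mathbb{N})$ be $\ell_2(\mathbb{N})$ equipped with a Krein space inner product $[\cdot,\cdot]$ whose fundamental symmetry $\tilde J$ satisfies that $[\cdot,\cdot]_{\tilde J}$ equals the standard inner product of $\ell_2(\mathbb{N})$. The pre-frame operator is $T:\mathfrak{k}_2(\mathbb{N})\to\mathcal{K}$, $T(\alpha_n)_n=\sum_n\alpha_nk_n$, with Krein-space adjoint $T^*$ (i.e. $[T^*h,a]=[h,Ta]$), and the frame operator is $S:=T\tilde JT^*$;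 one has $Sk=\sum_n[k_n,k]k_n$ for $k\in\mathcal{K}$. The operator $S$ is self-adjoint with respect to $[\cdot,\cdot]$ and invertible with bounded inverse (established in the paper prior to this theorem). *)

From HB Require Import structures.
From mathcomp Require Import all_boot all_order all_algebra.
From mathcomp Require Import complex.
From mathcomp Require Import all_classical all_reals all_analysis.
Set Implicit Arguments. Unset Strict Implicit. Unset Printing Implicit Defensive.
Import Order.TTheory GRing.Theory Num.Theory.
Import numFieldTopology.Exports numFieldNormedType.Exports.
Local Open Scope classical_set_scope.
Local Open Scope ring_scope.

Section Krein.
Variable R : realType.
Local Notation C := (R[i]).
Variable V : lmodType C.

Definition sesq_hermitian (ip : V -> V -> C) : Prop :=
  (forall h k, ip h k = conjc (ip k h)) /\
  (forall h (a : C) k l, ip h (a *: k + l) = a * ip h k + ip h l).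

Definition subspace (P : V -> Prop) : Prop :=
  P 0 /\ (forall (a : C) x y, P x -> P y -> P (a *: x + y)).

Definition normJ (ip : V -> V -> C) (J : V -> V) (k : V) : R :=
  Num.sqrt (@complex.Re R (ip k (J k))).

Definition cauchyJ ip J (u : nat -> V) : Prop :=
  forall e : R, 0 < e -> exists N : nat, forall m n : nat,
    (N <= m)%N -> (N <= n)%N -> normJ ip J (u m - u n) < e.

Definition cvgJ ip J (u : nat -> V) (l : V) : Prop :=
  (fun N => normJ ip J (u N - l)) @ \oo --> (0 : R).

(* (K, [.,.]) is a Krein space with fundamental decomposition K = Kp (+) Km
   and fundamental symmetry J, such that [.,.]_J = [., J .] makes K a
   Hilbert space. *)
Definition krein_space (ip : V -> V -> C) (Kp Km : V -> Prop) (J : V -> V)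
  : Prop :=
  sesq_hermitian ip /\
  [/\ subspace Kp /\ subspace Km,
      (forall x, Kp x -> Km x -> x = 0) /\
      (forall k, exists p m, [/\ Kp p, Km m & k = p + m]),
      (forall p m, Kp p -> Km m -> ip p m = 0) /\
      ((forall p, Kp p -> p != 0 -> 0 < ip p p) /\
      (forall m, Km m -> m != 0 -> ip m m < 0)),
      (forall p m, Kp p -> Km m -> J (p + m) = p - m) &
      (forall u, cauchyJ ip J u -> exists l, cvgJ ip J u l)].

Definition krein_frame ip J (kn : nat -> V) : Prop :=
  exists A B : R, 0 < A /\ A <= B /\ forall k : V,
    ((A * normJ ip J k ^+ 2)%:E <=
       \sum_(0 <= n <oo) ((Normc.normc (ip (kn n) k)) ^+ 2)%:E)%E /\
    (\sum_(0 <= n <oo) ((Normc.normc (ip (kn n) k)) ^+ 2)%:E <=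
       (B * normJ ip J k ^+ 2)%:E)%E.

Definition frame_operator ip J (kn : nat -> V) (S : V -> V) : Prop :=
  forall k, cvgJ ip J (fun N => \sum_(0 <= n < N) ip (kn n) k *: kn n) (S k).

Definition uncond_cvgJ ip J (u : nat -> V) (l : V) : Prop :=
  forall sigma : nat -> nat, bijective sigma ->
    cvgJ ip J (fun N => \sum_(0 <= n < N) u (sigma n)) l.

End Krein.

From HB Require Import structures.
From mathcomp Require Import all_boot all_order all_algebra.
From mathcomp Require Import complex.
From mathcomp Require Import all_classical all_reals all_analysis.
From mathcomp Require Import ring lra.
Import Order.TTheory GRing.Theory Num.Theory.
Local Open Scope ring_scope.
Local Open Scope complex_scope.
Set Implicit Arguments. Unset Strict Implicit.

(** The frame inequalities compare the Hilbert norm [||.||_J^2] with the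
    coefficient sums [sum_n |[k_n, .]|^2]; applied to [J v] the upper bound
    yields a Bessel inequality [||sum_m d_m k_m||_J^2 <= B sum_m |d_m|^2].
    The difference between a rearranged partial sum of [sum_n [k_n,x] k_n]
    and a long ordinary one has coefficients that vanish on an initial
    segment and are dominated by [[k_n,x]] elsewhere, so the Cauchy tail of
    the convergent series [sum_n |[k_n,x]|^2] forces every rearrangement to
    converge to [S x].  The lower frame bound makes [S^-1] bounded, which
    transports this to the first expansion; self-adjointness of [S] gives
    [[S^-1 k_n, k] = [k_n, S^-1 k]], so the second expansion is the one of
    [S (S^-1 k)]. *)

(* Plain [Re] would be the real part of [numClosedFieldType], valued in [R[i]]. *)
Local Notation Re := (@complex.Re _).
Local Notation Im := (@complex.Im _).

Section ComplexModulus.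
Variable R : realType.
Implicit Types (z w : R[i]) (r t : R).

Definition abs2 z : R := Re z ^+ 2 + Im z ^+ 2.

Lemma abs2_ge0 z : 0 <= abs2 z.
Proof. by rewrite addr_ge0 ?sqr_ge0. Qed.

Lemma abs2_0 : abs2 0 = 0.
Proof. by rewrite /abs2 /= expr0n addr0. Qed.

Lemma abs2_eq0 z : abs2 z = 0 -> z = 0.
Proof.
case: z => a b; rewrite /abs2 /= => h.
have -> : a = 0 by nra.
by have -> : b = 0 by nra.
Qed.

Lemma abs2_real r : abs2 r%:C = r ^+ 2.
Proof. by rewrite /abs2 /= expr0n addr0. Qed.

Lemma abs2N z : abs2 (- z) = abs2 z.
Proof. by case: z => a b; rewrite /abs2 /= !sqrrN. Qed.

Lemma abs2_conj z : abs2 (conjc z) = abs2 z.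
Proof. by case: z => a b; rewrite /abs2 /= sqrrN. Qed.

Lemma abs2B_le z w : abs2 (z - w) <= 2 * abs2 z + 2 * abs2 w.
Proof.
case: z w => a b [c d]; rewrite /abs2 /=.
have := sqr_ge0 (a + c); have := sqr_ge0 (b + d); nra.
Qed.

Lemma normc_sqr z : Normc.normc z ^+ 2 = abs2 z.
Proof. by case: z => a b; rewrite /= sqr_sqrtr // (abs2_ge0 (a +i* b)). Qed.

Lemma mul_conjc z : conjc z * z = (abs2 z)%:C.
Proof.
case: z => a b; rewrite /abs2; simpc; apply/eqP.
by rewrite eq_complex /=; apply/andP; split; apply/eqP; ring.
Qed.

Lemma Re_realM r z : Re (r%:C * z) = r * Re z.
Proof. by case: z => a b; simpc. Qed.

Lemma Re_mul_le t z w : 0 < t -> 2 * t * Re (z * w) <= t ^+ 2 * abs2 z + abs2 w.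
Proof.
case: z w => a b [c d]; rewrite /abs2; simpc => /= t0.
have := sqr_ge0 (t * a - c); have := sqr_ge0 (t * b + d); nra.
Qed.

End ComplexModulus.

Lemma ler0_small (R : realFieldType) (c a : R) :
  (forall e, 0 < e -> a <= c * e) -> a <= 0.
Proof.
move=> small; apply/ler_addgt0Pr => e e_gt0; rewrite add0r.
have c1_gt0 : 0 < `|c| + 1 by rewrite ltr_pwDr.
apply: le_trans (small _ (divr_gt0 e_gt0 c1_gt0)) _.
rewrite mulrA ler_pdivrMr // [e * _]mulrC ler_pM2r //.
by rewrite (le_trans (ler_norm c)) // lerDl.
Qed.

Section LinearEndomorphism.
Variables (K : pzRingType) (U : lmodType K) (f : U -> U).
Hypothesis f_lin : linear f.

Lemma linD x y : f (x + y) = f x + f y.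
Proof. by have := f_lin 1 x y; rewrite !scale1r. Qed.

Lemma lin0 : f 0 = 0.
Proof. by apply: (addrI (f 0)); rewrite -linD !addr0. Qed.

Lemma linZ a x : f (a *: x) = a *: f x.
Proof. by have := f_lin a x 0; rewrite !addr0 lin0 addr0. Qed.

Lemma linN x : f (- x) = - f x.
Proof. by rewrite -scaleN1r linZ scaleN1r. Qed.

Lemma linB x y : f (x - y) = f x - f y.
Proof. by rewrite linD linN. Qed.

Lemma lin_sumZ I (r : seq I) (P : pred I) (a : I -> K) (v : I -> U) :
  f (\sum_(i <- r | P i) a i *: v i) = \sum_(i <- r | P i) a i *: f (v i).
Proof.
rewrite (big_morph f linD lin0); apply: eq_bigr => i _; exact: linZ.
Qed.

End LinearEndomorphism.

Lemma big_nat_inj_mask (M : nmodType) (sg : nat -> nat) N K (F : nat -> M) :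
  injective sg -> (forall n, (n < N)%N -> (sg n < K)%N) ->
  \sum_(0 <= n < N) F (sg n) =
  \sum_(0 <= m < K | m \in map sg (index_iota 0 N)) F m.
Proof.
move=> sg_inj sgK.
have -> : \sum_(0 <= n < N) F (sg n) = \sum_(m <- map sg (index_iota 0 N)) F m.
  by rewrite big_map.
rewrite -[RHS]big_filter; apply: perm_big; apply: uniq_perm.
- by rewrite map_inj_uniq // iota_uniq.
- by rewrite filter_uniq // iota_uniq.
move=> m; rewrite mem_filter andb_idr // => /mapP[n].
by rewrite !mem_index_iota => /andP[_ /sgK] ? ->.
Qed.

Lemma sum_abs2_tail (R : realType) (c d : nat -> R[i]) m0 K : (m0 <= K)%N ->
  (forall m, (m < m0)%N -> d m = 0) -> (forall m, abs2 (d m) <= abs2 (c m)) ->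
  \sum_(0 <= m < K) abs2 (d m) <=
    \sum_(0 <= m < K) abs2 (c m) - \sum_(0 <= m < m0) abs2 (c m).
Proof.
move=> m0K d0 dc; rewrite !(big_cat_nat (leq0n m0) m0K) /= [X in _ <= X]addrC addKr.
rewrite big1_seq ?add0r; last first.
  by move=> m; rewrite mem_index_iota => /andP[_ /d0 ->]; exact: abs2_0.
by apply: ler_sum => m _; exact: dc.
Qed.

Section KreinSpace.
Variables (R : realType) (V : lmodType R[i]).
Variables (ip : V -> V -> R[i]) (Kp Km : V -> Prop) (J : V -> V).
Hypothesis hK : krein_space ip Kp Km J.

Lemma ip_conj h k : ip h k = conjc (ip k h).
Proof. by case: hK => -[]. Qed.

Lemma ip_linear h a k l : ip h (a *: k + l) = a * ip h k + ip h l.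
Proof. by case: hK => -[]. Qed.

Lemma iprD h k l : ip h (k + l) = ip h k + ip h l.
Proof. by rewrite -[k]scale1r ip_linear mul1r scale1r. Qed.

Lemma ipr0 h : ip h 0 = 0.
Proof. by apply: (addrI (ip h 0)); rewrite -iprD !addr0. Qed.

Lemma iprZ h a k : ip h (a *: k) = a * ip h k.
Proof. by rewrite -[a *: k]addr0 ip_linear ipr0 addr0. Qed.

Lemma iprN h k : ip h (- k) = - ip h k.
Proof. by rewrite -scaleN1r iprZ mulN1r. Qed.

Lemma iprB h k l : ip h (k - l) = ip h k - ip h l.
Proof. by rewrite iprD iprN. Qed.

Lemma ipr_sum h I (r : seq I) (P : pred I) (F : I -> V) :
  ip h (\sum_(i <- r | P i) F i) = \sum_(i <- r | P i) ip h (F i).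
Proof. exact: (big_morph (ip h) (iprD h) (ipr0 h)). Qed.

Lemma iplD h k l : ip (k + l) h = ip k h + ip l h.
Proof. by rewrite ip_conj iprD rmorphD /= -!ip_conj. Qed.

Lemma iplZ h a k : ip (a *: k) h = conjc a * ip k h.
Proof. by rewrite ip_conj iprZ rmorphM /= -ip_conj. Qed.

Lemma ipl0 h : ip 0 h = 0.
Proof. by rewrite ip_conj ipr0 conjc0. Qed.

Lemma iplN h k : ip (- k) h = - ip k h.
Proof. by rewrite ip_conj iprN rmorphN /= -ip_conj. Qed.

Lemma iplB h k l : ip (k - l) h = ip k h - ip l h.
Proof. by rewrite iplD iplN. Qed.

Lemma ipl_sum h I (r : seq I) (P : pred I) (F : I -> V) :
  ip (\sum_(i <- r | P i) F i) h = \sum_(i <- r | P i) ip (F i) h.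
Proof. exact: (big_morph (ip^~ h) (fun k l => iplD h k l) (ipl0 h)). Qed.

Lemma krein_decomp k : exists p m, [/\ Kp p, Km m & k = p + m].
Proof. by case: hK => _ [_ [_ ?] _ _ _]. Qed.

Lemma Kp_linear a x y : Kp x -> Kp y -> Kp (a *: x + y).
Proof. by case: hK => _ [[[_ ?] _] _ _ _ _]; auto. Qed.

Lemma Km_linear a x y : Km x -> Km y -> Km (a *: x + y).
Proof. by case: hK => _ [[_ [_ ?]] _ _ _ _]; auto. Qed.

Lemma KmN m : Km m -> Km (- m).
Proof.
case: hK => _ [[_ [Km0 _]] _ _ _ _] hm.
by have := Km_linear (-1) hm Km0; rewrite addr0 scaleN1r.
Qed.

Lemma JE p m : Kp p -> Km m -> J (p + m) = p - m.
Proof. by case: hK => _ [_ _ _ ? _]; auto. Qed.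

Lemma ip_KpKm p m : Kp p -> Km m -> ip p m = 0.
Proof. by case: hK => _ [_ _ [? _] _ _]; auto. Qed.

Lemma ip_KmKp p m : Kp p -> Km m -> ip m p = 0.
Proof. by move=> hp hm; rewrite ip_conj ip_KpKm // conjc0. Qed.

Lemma ip_Kp_ge0 p : Kp p -> 0 <= Re (ip p p).
Proof.
case: hK => _ [_ _ [_ [pos _]] _ _] hp.
have [->|/(pos _ hp)] := eqVneq p 0; first by rewrite ipr0.
by rewrite ltcE => /andP[_ /ltW].
Qed.

Lemma ip_Kp_eq0 p : Kp p -> Re (ip p p) <= 0 -> p = 0.
Proof.
case: hK => _ [_ _ [_ [pos _]] _ _] hp; apply: contraTeq => /(pos _ hp).
by rewrite ltcE -ltNge => /andP[].
Qed.

Lemma ip_Km_le0 m : Km m -> Re (ip m m) <= 0.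
Proof.
case: hK => _ [_ _ [_ [_ neg]] _ _] hm.
have [->|/(neg _ hm)] := eqVneq m 0; first by rewrite ipr0.
by rewrite ltcE => /andP[_ /ltW].
Qed.

Lemma ip_Km_eq0 m : Km m -> 0 <= Re (ip m m) -> m = 0.
Proof.
case: hK => _ [_ _ [_ [_ neg]] _ _] hm; apply: contraTeq => /(neg _ hm).
by rewrite ltcE -ltNge => /andP[].
Qed.

Lemma J_linear : linear J.
Proof.
move=> a x y.
have [p1 [m1 [hp1 hm1 ->]]] := krein_decomp x.
have [p2 [m2 [hp2 hm2 ->]]] := krein_decomp y.
rewrite scalerDr addrACA (JE (Kp_linear a hp1 hp2) (Km_linear a hm1 hm2)).
by rewrite !JE // scalerBr addrACA opprD.
Qed.

Lemma JK : involutive J.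
Proof.
move=> x; have [p [m [hp hm ->]]] := krein_decomp x.
by rewrite JE // JE ?opprK //; exact: KmN.
Qed.

Lemma ip_J x y : ip x (J y) = ip (J x) y.
Proof.
have [p1 [m1 [hp1 hm1 ->]]] := krein_decomp x.
have [p2 [m2 [hp2 hm2 ->]]] := krein_decomp y.
rewrite !JE // iprB !iprD iplB !iplD (ip_KpKm hp1 hm2) (ip_KmKp hp2 hm1).
by rewrite iplN !(addr0, add0r, subr0).
Qed.

Definition sqnormJ x := Re (ip x (J x)).

Lemma sqnormJ_decomp p m : Kp p -> Km m ->
  sqnormJ (p + m) = Re (ip p p) - Re (ip m m).
Proof.
move=> hp hm; rewrite /sqnormJ JE // iprB !iplD (ip_KpKm hp hm) (ip_KmKp hp hm).
by rewrite addr0 add0r raddfB.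
Qed.

Lemma sqnormJ_ge0 x : 0 <= sqnormJ x.
Proof.
have [p [m [hp hm ->]]] := krein_decomp x; rewrite sqnormJ_decomp //.
by rewrite subr_ge0 (le_trans (ip_Km_le0 hm) (ip_Kp_ge0 hp)).
Qed.

Lemma sqnormJ_eq0 x : sqnormJ x = 0 -> x = 0.
Proof.
have [p [m [hp hm ->]]] := krein_decomp x; rewrite sqnormJ_decomp // => E.
move/eqP: E; rewrite subr_eq0 => /eqP E.
have -> : p = 0 by apply: (ip_Kp_eq0 hp); rewrite E ip_Km_le0.
have -> : m = 0 by apply: (ip_Km_eq0 hm); rewrite -E ip_Kp_ge0.
by rewrite addr0.
Qed.

Lemma sqnormJ0 : sqnormJ 0 = 0.
Proof. by rewrite /sqnormJ ipl0. Qed.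

Lemma sqnormJD x y : sqnormJ (x + y) = sqnormJ x + sqnormJ y + 2 * Re (ip x (J y)).
Proof.
rewrite /sqnormJ (linD J_linear) !iprD !iplD !raddfD /= [ip y (J x)]ip_J [ip (J y) x]ip_conj.
by case: (ip x (J y)) => a b /=; ring.
Qed.

Lemma sqnormJZ a x : sqnormJ (a *: x) = abs2 a * sqnormJ x.
Proof.
by rewrite /sqnormJ (linZ J_linear) iprZ iplZ mulrA (mulrC a) mul_conjc Re_realM.
Qed.

Lemma sqnormJN x : sqnormJ (- x) = sqnormJ x.
Proof. by rewrite /sqnormJ (linN J_linear) iprN iplN opprK. Qed.

Lemma sqnormJB_sym x y : sqnormJ (x - y) = sqnormJ (y - x).
Proof. by rewrite -sqnormJN opprB. Qed.

Lemma sqnormJ_J x : sqnormJ (J x) = sqnormJ x.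
Proof. by rewrite /sqnormJ JK -ip_J. Qed.

Lemma Re_ipJ_le x y t : 2 * t * Re (ip x (J y)) <= t ^+ 2 * sqnormJ x + sqnormJ y.
Proof.
have := sqnormJ_ge0 (t%:C *: x - y).
by rewrite sqnormJD sqnormJZ sqnormJN abs2_real (linN J_linear) iprN iplZ
  conjc_real raddfN /= Re_realM; lra.
Qed.

Lemma Re_ip_le x y t : 2 * t * Re (ip x y) <= t ^+ 2 * sqnormJ x + sqnormJ y.
Proof. by rewrite -{1}[y]JK -(sqnormJ_J y) Re_ipJ_le. Qed.

Lemma sqnormJD_le x y : sqnormJ (x + y) <= 2 * sqnormJ x + 2 * sqnormJ y.
Proof. by have := Re_ipJ_le x y 1; rewrite sqnormJD; lra. Qed.

Lemma abs2_ip_le x y : abs2 (ip x y) <= sqnormJ x * sqnormJ y.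
Proof.
have [->|y0] := eqVneq y 0; first by rewrite ipr0 abs2_0 sqnormJ0 mulr0.
have qy : 0 < sqnormJ y.
  by rewrite lt_neqAle sqnormJ_ge0 andbT eq_sym; apply: contra y0 => /eqP/sqnormJ_eq0->.
have := Re_ip_le x (conjc (ip x y) *: y) (sqnormJ y).
rewrite iprZ mulrC mul_conjc /= sqnormJZ abs2_conj.
have := abs2_ge0 (ip x y); have := sqnormJ_ge0 x; nra.
Qed.

Lemma sqr_normJ x : normJ ip J x ^+ 2 = sqnormJ x.
Proof. by rewrite sqr_sqrtr //; exact: sqnormJ_ge0 x. Qed.

Lemma cvgJP u l : cvgJ ip J u l <->
  (forall e, 0 < e -> exists N, forall n, (N <= n)%N -> sqnormJ (u n - l) < e).
Proof.
split.
- move=> /cvgrPdist_lt cvg_ul e e_gt0.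
  have [N _ HN] := cvg_ul (Num.sqrt e) ltac:(by rewrite sqrtr_gt0).
  exists N => n /HN /=; rewrite sub0r normrN ger0_norm ?sqrtr_ge0 //.
  by rewrite ltr_sqrt.
- move=> cvg_ul; apply/cvgrPdist_lt => e e_gt0.
  have [N HN] := cvg_ul (e ^+ 2) (exprn_gt0 2 e_gt0).
  exists N => // n /HN /= lt_e; rewrite sub0r normrN ger0_norm ?sqrtr_ge0 //.
  by rewrite -(ger0_norm (ltW e_gt0)) -sqrtr_sqr ltr_sqrt // exprn_gt0.
Qed.

Lemma cvgJ_le c u l : 0 < c ->
  (forall e, 0 < e -> exists N, forall n, (N <= n)%N -> sqnormJ (u n - l) <= c * e) ->
  cvgJ ip J u l.
Proof.
move=> c_gt0 near_ul; apply/cvgJP => e e_gt0.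
have [N HN] := near_ul (e / (2 * c)) (divr_gt0 e_gt0 (mulr_gt0 (ltr0Sn _ 1) c_gt0)).
have half : c * (e / (2 * c)) = e / 2 by field; rewrite gt_eqF.
exists N => n /HN; rewrite half => le_e; lra.
Qed.

Lemma cvgJ_uniq u l1 l2 : cvgJ ip J u l1 -> cvgJ ip J u l2 -> l1 = l2.
Proof.
move=> /cvgJP cvg1 /cvgJP cvg2; apply/eqP; rewrite -subr_eq0; apply/eqP.
apply: sqnormJ_eq0; apply/le_anti; rewrite sqnormJ_ge0 andbT.
apply: (ler0_small (c := 4)) => e e_gt0.
have [N1 HN1] := cvg1 e e_gt0; have [N2 HN2] := cvg2 e e_gt0.
have := sqnormJD_le (l1 - u (maxn N1 N2)) (u (maxn N1 N2) - l2).
rewrite addrA subrK (sqnormJB_sym l1 (u _)).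
have := HN1 _ (leq_maxl N1 N2); have := HN2 _ (leq_maxr N1 N2).
lra.
Qed.

Lemma cvgJ_comb a u w l1 l2 : cvgJ ip J u l1 -> cvgJ ip J w l2 ->
  cvgJ ip J (fun N => a *: u N + w N) (a *: l1 + l2).
Proof.
move=> /cvgJP cvg1 /cvgJP cvg2.
apply: (cvgJ_le (c := 2 * abs2 a + 2)) => [|e e_gt0].
  by rewrite ltr_wpDl ?mulr_ge0 ?abs2_ge0.
have [N1 HN1] := cvg1 e e_gt0; have [N2 HN2] := cvg2 e e_gt0.
exists (maxn N1 N2) => n; rewrite geq_max => /andP[n1 n2].
have -> : a *: u n + w n - (a *: l1 + l2) = a *: (u n - l1) + (w n - l2).
  by rewrite scalerBr opprD addrACA.
apply: le_trans (sqnormJD_le _ _) _; rewrite sqnormJZ.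
have : abs2 a * sqnormJ (u n - l1) <= abs2 a * e.
  by rewrite ler_wpM2l ?abs2_ge0 ?ltW ?HN1.
have := HN2 _ n2; lra.
Qed.

Lemma cvgJ_bounded f c u l : linear f -> 0 < c ->
  (forall v, sqnormJ (f v) <= c * sqnormJ v) ->
  cvgJ ip J u l -> cvgJ ip J (fun n => f (u n)) (f l).
Proof.
move=> f_lin c_gt0 f_bd /cvgJP cvg_ul; apply: (cvgJ_le c_gt0) => e e_gt0.
have [N HN] := cvg_ul e e_gt0; exists N => n /HN lt_e.
by rewrite -(linB f_lin); apply: le_trans (f_bd _) _; rewrite ler_pM2l // ltW.
Qed.

Section Frame.
Variables (kn : nat -> V) (A B : R).
Hypotheses (A_gt0 : 0 < A) (AB : A <= B).
Hypothesis frame_bounds : forall k : V,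
    ((A * normJ ip J k ^+ 2)%:E <=
       \sum_(0 <= n <oo) ((Normc.normc (ip (kn n) k)) ^+ 2)%:E)%E /\
    (\sum_(0 <= n <oo) ((Normc.normc (ip (kn n) k)) ^+ 2)%:E <=
       (B * normJ ip J k ^+ 2)%:E)%E.

Definition frame_psum x N := \sum_(0 <= n < N) abs2 (ip (kn n) x).

Lemma frame_seriesE x :
  (\sum_(0 <= n <oo) ((Normc.normc (ip (kn n) x)) ^+ 2)%:E =
   ereal_sup (range (fun N => (frame_psum x N)%:E)))%E.
Proof.
have terms_ge0 n : (0 <= n)%N -> xpredT n ->
    (0 <= ((Normc.normc (ip (kn n) x)) ^+ 2)%:E)%E.
  by move=> _ _; rewrite lee_fin sqr_ge0.
move/ereal_nondecreasing_series/ereal_nondecreasing_cvgn/cvg_lim : terms_ge0 => -> //.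
congr ereal_sup; apply: eq_set => y; rewrite propeqE.
by split => -[N _ <-]; exists N => //; rewrite sumEFin; under eq_bigr do rewrite normc_sqr.
Qed.

Lemma frame_psum_le x N : frame_psum x N <= B * sqnormJ x.
Proof.
have [_] := frame_bounds x; rewrite frame_seriesE sqr_normJ => sup_le.
by rewrite -lee_fin; apply: le_trans sup_le; apply: ereal_sup_ubound; exists N.
Qed.

Lemma frame_psum_gt x e : 0 < e -> exists N, A * sqnormJ x - e < frame_psum x N.
Proof.
move=> e_gt0; have [le_sup _] := frame_bounds x.
rewrite frame_seriesE sqr_normJ in le_sup.
have : ((A * sqnormJ x - e)%:E < ereal_sup (range (fun N => (frame_psum x N)%:E)))%E.
  by apply: lt_le_trans le_sup; rewrite lte_fin ltrBlDr ltrDl.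
by move=> /ereal_sup_gt [_ [N _ <-]]; rewrite lte_fin; exists N.
Qed.

Lemma frame_psum_mono x : {homo frame_psum x : N M / (N <= M)%N >-> N <= M}.
Proof.
move=> N M NM; rewrite /frame_psum (big_cat_nat (leq0n N) NM) /= lerDl.
by apply: sumr_ge0 => n _; exact: abs2_ge0.
Qed.

Lemma frame_psum_tail x e : 0 < e ->
  exists m0, forall K, frame_psum x K - frame_psum x m0 < e.
Proof.
have psum_sup : has_sup (range (frame_psum x)).
  by split; [exists (frame_psum x 0), 0%N | exists (B * sqnormJ x) => _ [N _ <-]; exact: frame_psum_le].
move=> e_gt0; have [_ [m0 _ <-] near_sup] := sup_adherent e_gt0 psum_sup.
exists m0 => K; have : frame_psum x K <= sup (range (frame_psum x)).
  by apply: ub_le_sup; [case: psum_sup | exists K].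
lra.
Qed.

Lemma frame_bessel K (d : nat -> R[i]) :
  sqnormJ (\sum_(0 <= m < K) d m *: kn m) <= B * \sum_(0 <= m < K) abs2 (d m).
Proof.
set v := \sum_(0 <= m < K) d m *: kn m; set X := \sum_(0 <= m < K) abs2 (d m).
have B_gt0 : 0 < B := lt_le_trans A_gt0 AB.
have sqnormJ_v : sqnormJ v = \sum_(0 <= m < K) Re (d m * ip (J v) (kn m)).
  rewrite -[sqnormJ v]/(Re (ip v (J v))) ip_J -raddf_sum {2}/v ipr_sum.
  by congr Re; apply: eq_bigr => m _; rewrite iprZ.
have coef_le : \sum_(0 <= m < K) abs2 (ip (J v) (kn m)) <= B * sqnormJ v.
  rewrite -(sqnormJ_J v); apply: le_trans (frame_psum_le _ K).
  by apply: ler_sum => m _; rewrite ip_conj abs2_conj.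
have amgm : 2 * B * sqnormJ v <= B ^+ 2 * X + \sum_(0 <= m < K) abs2 (ip (J v) (kn m)).
  rewrite sqnormJ_v mulr_sumr /X mulr_sumr -big_split /=.
  by apply: ler_sum => m _; exact: Re_mul_le.
by rewrite -(ler_pM2l B_gt0) mulrA -expr2; lra.
Qed.

Variable S : V -> V.
Hypothesis hS : frame_operator ip J kn S.

Definition frame_sum x N := \sum_(0 <= n < N) ip (kn n) x *: kn n.

Lemma frame_sum_cvg x : cvgJ ip J (frame_sum x) (S x).
Proof. exact: hS. Qed.

Lemma frame_operator_linear : linear S.
Proof.
move=> a x y; apply: (cvgJ_uniq (frame_sum_cvg (a *: x + y))).
have := cvgJ_comb a (frame_sum_cvg x) (frame_sum_cvg y).
congr cvgJ; apply: funext => N; rewrite /frame_sum scaler_sumr -big_split.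
by apply: eq_bigr => n _; rewrite ip_linear scalerDl scalerA.
Qed.

Lemma frame_psumE x N : frame_psum x N = Re (ip x (frame_sum x N)).
Proof.
rewrite /frame_sum ipr_sum raddf_sum; apply: eq_bigr => n _.
by rewrite iprZ [ip x _]ip_conj mulrC mul_conjc.
Qed.

Lemma frame_operator_lower x : A ^+ 2 * sqnormJ x <= 2 * sqnormJ (S x).
Proof.
rewrite -subr_le0; apply: (ler0_small (c := 2 + 2 * A)) => e e_gt0.
have [N1 HN1] := frame_psum_gt x e_gt0.
have /cvgJP /(_ e e_gt0) [N2 HN2] := frame_sum_cvg x.
set N := maxn N1 N2.
have S_close := HN2 _ (leq_maxr N1 N2).
(* AM-GM on [Re [x, s_N x]], the partial frame sum, which is close to
   [A ||x||^2] from above while [s_N x] is close to [S x]. *)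
have amgm := Re_ip_le x (frame_sum x N) A; rewrite -frame_psumE in amgm.
have := sqnormJD_le (S x) (frame_sum x N - S x); rewrite addrC subrK.
have : 2 * A * (A * sqnormJ x - e) <= 2 * A * frame_psum x N.
  rewrite ler_pM2l ?mulr_gt0 // ltW //.
  exact: lt_le_trans HN1 (frame_psum_mono x (leq_maxl N1 N2)).
lra.
Qed.

Lemma frame_operator_sym x y : ip y (S x) = ip (S y) x.
Proof.
apply/eqP; rewrite -subr_eq0; apply/eqP/abs2_eq0/le_anti.
rewrite abs2_ge0 andbT; apply: (ler0_small (c := 2 * sqnormJ y + 2 * sqnormJ x)).
move=> e e_gt0.
have /cvgJP /(_ e e_gt0) [N1 HN1] := frame_sum_cvg x.
have /cvgJP /(_ e e_gt0) [N2 HN2] := frame_sum_cvg y.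
set N := maxn N1 N2.
(* The identity holds for the partial sums; Cauchy-Schwarz passes to the limit. *)
have sum_sym : ip y (frame_sum x N) = ip (frame_sum y N) x.
  rewrite /frame_sum ipr_sum ipl_sum; apply: eq_bigr => n _.
  by rewrite iprZ iplZ -ip_conj mulrC.
have -> : ip y (S x) - ip (S y) x =
    ip y (S x - frame_sum x N) - ip (S y - frame_sum y N) x.
  by rewrite iprB iplB sum_sym opprB addrA subrK.
apply: le_trans (abs2B_le _ _) _; rewrite [ip (S y - _) x]ip_conj abs2_conj.
have := abs2_ip_le y (S x - frame_sum x N).
have := abs2_ip_le x (S y - frame_sum y N).
rewrite !(sqnormJB_sym (S _)).
have : sqnormJ y * sqnormJ (frame_sum x N - S x) <= sqnormJ y * e.
  by rewrite ler_wpM2l ?sqnormJ_ge0 ?ltW ?HN1 ?leq_maxl.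
have : sqnormJ x * sqnormJ (frame_sum y N - S y) <= sqnormJ x * e.
  by rewrite ler_wpM2l ?sqnormJ_ge0 ?ltW ?HN2 ?leq_maxr.
lra.
Qed.

Lemma frame_sum_perm_le x (sg : nat -> nat) m0 M N :
  injective sg -> (m0 <= M)%N ->
  (forall m, (m < m0)%N -> exists2 n, (n < N)%N & sg n = m) ->
  exists K, sqnormJ (\sum_(0 <= n < N) ip (kn (sg n)) x *: kn (sg n) - frame_sum x M)
    <= B * (frame_psum x K - frame_psum x m0).
Proof.
move=> sg_inj m0M cover.
pose K := maxn M (\max_(n < N) (sg n).+1).
have MK : (M <= K)%N := leq_maxl _ _.
have sgK n : (n < N)%N -> (sg n < K)%N.
  move=> nN; apply: leq_trans (leq_maxr M _).
  exact: (leq_bigmax (F := fun i : 'I_N => (sg i).+1) (Ordinal nN)).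
pose d m := (if m \in map sg (index_iota 0 N) then ip (kn m) x else 0)
  - (if (m < M)%N then ip (kn m) x else 0).
have -> : \sum_(0 <= n < N) ip (kn (sg n)) x *: kn (sg n) - frame_sum x M =
    \sum_(0 <= m < K) d m *: kn m.
  rewrite (big_nat_inj_mask (fun m => ip (kn m) x *: kn m) sg_inj sgK).
  rewrite /frame_sum (big_nat_widen _ _ _ _ _ MK).
  rewrite [X in X - _]big_mkcond [X in _ - X]big_mkcond -sumrB.
  by apply: eq_bigr => m _; rewrite /d scalerBl /=; congr (_ - _); case: ifP; rewrite ?scale0r.
exists K; apply: le_trans (frame_bessel K d) _.
rewrite ler_wpM2l ?(ltW (lt_le_trans A_gt0 AB)) //; apply: sum_abs2_tail.
- exact: leq_trans m0M MK.
- move=> m m_lt; have [n nN sgn] := cover m m_lt.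
  by rewrite /d -{1}sgn map_f ?mem_index_iota // (leq_trans m_lt m0M) subrr.
- move=> m; rewrite /d; case: ifP => _; case: ifP => _;
    by rewrite ?subrr ?subr0 ?sub0r ?abs2N ?abs2_0 ?abs2_ge0.
Qed.

Lemma frame_sum_uncond x : uncond_cvgJ ip J (fun n => ip (kn n) x *: kn n) (S x).
Proof.
move=> sg [g sgK gK].
have B_gt0 : 0 < B := lt_le_trans A_gt0 AB.
apply: (cvgJ_le (c := 2 * B + 2)) => [|e e_gt0]; first by rewrite ltr_wpDl ?mulr_ge0 ?ltW.
have [m0 tail] := frame_psum_tail x e_gt0.
have /cvgJP /(_ e e_gt0) [M0 HM0] := frame_sum_cvg x.
set M := maxn M0 m0.
exists (\max_(j < m0) (g j).+1)%N => N hN.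
have cover m : (m < m0)%N -> exists2 n, (n < N)%N & sg n = m.
  move=> m_lt; exists (g m); last exact: gK.
  apply: leq_trans hN; exact: (leq_bigmax (F := fun j : 'I_m0 => (g j).+1) (Ordinal m_lt)).
have [K HK] := frame_sum_perm_le x (can_inj sgK) (leq_maxr M0 m0) cover.
have := sqnormJD_le
  (\sum_(0 <= n < N) ip (kn (sg n)) x *: kn (sg n) - frame_sum x M) (frame_sum x M - S x).
rewrite addrA subrK.
have := HM0 M (leq_maxl M0 m0).
have : B * (frame_psum x K - frame_psum x m0) <= B * e by rewrite ler_pM2l // ltW.
lra.
Qed.

Variable Sinv : V -> V.
Hypotheses (SinvK : cancel Sinv S) (SKinv : cancel S Sinv).

Lemma frame_inverse_linear : linear Sinv.
Proof.
move=> a x y; apply: (can_inj SKinv); rewrite SinvK.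
by have := frame_operator_linear a (Sinv x) (Sinv y); rewrite !SinvK => ->.
Qed.

Lemma frame_inverse_bounded y : sqnormJ (Sinv y) <= 2 / A ^+ 2 * sqnormJ y.
Proof.
rewrite mulrAC ler_pdivlMr ?exprn_gt0 // mulrC.
by have := frame_operator_lower (Sinv y); rewrite SinvK.
Qed.

Lemma frame_expansion k :
  uncond_cvgJ ip J (fun n => ip (kn n) k *: Sinv (kn n)) k.
Proof.
move=> sg sg_bij.
have c_gt0 : 0 < 2 / A ^+ 2 by rewrite divr_gt0 ?exprn_gt0.
have := cvgJ_bounded frame_inverse_linear c_gt0 frame_inverse_bounded
  (@frame_sum_uncond k sg sg_bij).
rewrite SKinv; congr cvgJ; apply: funext => N.
by rewrite (lin_sumZ frame_inverse_linear).
Qed.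

Lemma frame_dual_expansion k :
  uncond_cvgJ ip J (fun n => ip (Sinv (kn n)) k *: kn n) k.
Proof.
have ip_Sinv v : ip (Sinv v) k = ip v (Sinv k).
  by rewrite -{1}(SinvK k) frame_operator_sym SinvK.
move=> sg sg_bij; have := @frame_sum_uncond (Sinv k) sg sg_bij.
rewrite SinvK; congr cvgJ; apply: funext => N.
by apply: eq_bigr => n _; rewrite ip_Sinv.
Qed.

End Frame.

End KreinSpace.

Unset Implicit Arguments.

Theorem theorem3p6 (R : realType) (V : lmodType R[i])
    (ip : V -> V -> R[i]) (Kp Km : V -> Prop) (J : V -> V)
    (kn : nat -> V) (S Sinv : V -> V) :
  krein_space ip Kp Km J ->
  krein_frame ip J kn ->
  frame_operator ip J kn S ->
  cancel Sinv S -> cancel S Sinv ->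
  forall k : V,
    uncond_cvgJ ip J (fun n => ip (kn n) k *: Sinv (kn n)) k /\
    uncond_cvgJ ip J (fun n => ip (Sinv (kn n)) k *: kn n) k.
Proof.
move=> hK [A [B [A_gt0 [AB bounds]]]] hS SinvK SKinv k; split.
- exact: (frame_expansion hK A_gt0 AB bounds hS SinvK SKinv).
- exact: (frame_dual_expansion hK A_gt0 AB bounds hS SinvK).
Qed.
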